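(* Let $r\in(r_-,0)\cup(r_+,\infty)$, where $r_\pm=(11\pm5\sqrt5)/2$. Then $T^2$ maps the bounded connected component of $E_r$ into the unbounded connected component of $E_r$.
   Context: $T(x,y)=\bigg(\dfrac{(1+y)(1+x-xy)^2}{(1+x)(-1-y+xy)(1+x-y^2)},\ \dfrac{(x-y)^2(1+x+y)}{(1+y-x^2)(1+x-y^2)}\bigg)$. $E_r\subset\mathbb{RP}^2$ is the real projective curve given by the homogenization of $(x+1)(y+1)(x+y+1)-rxy=0$, i.e. the level set $I=r$ of $I(x,y)=\frac{(x+1)(y+1)(x+y+1)}{xy}$. For these $r$, $E_r$ has exactly two connected components, one bounded (its intersection with the affine plane is bounded) and one unbounded. $T^2$ preserves the set $E_r$ (where defined). *)

From HB Require Import structures.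
From mathcomp Require Import all_boot all_order all_algebra.
From mathcomp Require Import all_classical all_reals all_analysis.
Import numFieldNormedType.Exports.
Set Implicit Arguments. Unset Strict Implicit. Unset Printing Implicit Defensive.
Import Order.TTheory GRing.Theory Num.Theory.
Local Open Scope ring_scope.
Local Open Scope classical_set_scope.

Section Defs.
Variable R : realType.

Definition r_minus : R := (11 - 5 * Num.sqrt 5) / 2.
Definition r_plus  : R := (11 + 5 * Num.sqrt 5) / 2.

Definition Epoly (r x y : R) : R := (x + 1) * (y + 1) * (x + y + 1) - r * x * y.

(* affine part E_r ∩ R^2 of the projective curve E_r *)
Definition Eaff (r : R) : set (R * R) := [set p | Epoly r p.1 p.2 = 0].

Definition T_defined (p : R * R) : Prop :=
  let x := p.1 in let y := p.2 in
  (1 + x) * (-1 - y + x * y) * (1 + x - y ^+ 2) != 0 /\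
  (1 + y - x ^+ 2) * (1 + x - y ^+ 2) != 0.

Definition T (p : R * R) : R * R :=
  let x := p.1 in let y := p.2 in
  ((1 + y) * (1 + x - x * y) ^+ 2 /
     ((1 + x) * (-1 - y + x * y) * (1 + x - y ^+ 2)),
   (x - y) ^+ 2 * (1 + x + y) / ((1 + y - x ^+ 2) * (1 + x - y ^+ 2))).

Definition bounded2 (A : set (R * R)) : Prop :=
  exists M : R, forall p, A p -> `|p.1| <= M /\ `|p.2| <= M.

End Defs.

From HB Require Import structures.
From mathcomp Require Import all_boot all_order all_algebra.
From mathcomp Require Import all_classical all_reals all_analysis.
From mathcomp Require Import ring lra.
Import numFieldNormedType.Exports.
Import Order.TTheory GRing.Theory Num.Theory.

(* T maps the level set I = s to the level set I = -1/s, so T^2 preserves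
   E_r.  Writing A = 1+x-xy, B = xy-1-y, C = 1+x-y^2, D = 1+y-x^2, the
   coordinates of (X, Y) = T(x, y) factor as
     X = (1+y) A^2 / ((1+x) B C),   X + 1 = - y (x-y) D / ((1+x) B C),
     Y = (x-y)^2 (1+x+y) / (D C),   Y + 1 = - A B / (D C),
   so the signs of X Y, X (X+1) and Y (Y+1) are signs of explicit products.
   A case analysis on the signs of x, y, 1+x, 1+y shows that for q on E_s
   these signs are never those of a point of the positive quadrant (when
   s < 0) or of the square (-1,0)^2 (when s > 0).  Applied to q = T p with
   s = -1/r, this keeps T^2 p out of that region.  Outside of it, a point of
   E_r lies on a branch y = g(x) of the curve, viewed as a quadratic in y,
   that is continuous over a half-line of x's, so its connected component
   is unbounded. *)

Set Implicit Arguments.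
Unset Strict Implicit.
Unset Printing Implicit Defensive.

Local Open Scope ring_scope.
Local Open Scope classical_set_scope.

Section Signs.
Variable R : realFieldType.
Implicit Types x y : R.

Lemma gt0_of_mul_sqr (a b c : R) : 0 < c -> c = a * b ^+ 2 -> 0 < a.
Proof.
move=> c0 cab; have b0 : b != 0.
  by apply: contraTneq c0 => b0; rewrite cab b0 expr0n mulr0 ltxx.
have b2 : 0 < b ^+ 2 by rewrite exprn_even_gt0.
by rewrite -(pmulr_lgt0 _ b2) -cab.
Qed.

(* In each sign region of
   x, y, 1+x, 1+y, two of the four factors ((1+y) B and the three cofactors)
   are forced to have opposite signs, except for -1 < x, y < 0 and 0 < x, y,
   where one also uses A + B = x - y, resp. B + D = x (y - x). *)
Lemma sign_obstruction x y :
  0 < (1 + x) * (1 + x + y) * (1 + y - x ^+ 2) * ((1 + y) * (-1 - y + x * y)) ->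
  0 < x * (x - y) * ((1 + y) * (-1 - y + x * y)) ->
  0 < (1 + x) * x * y * (1 + x - x * y) * ((1 + y) * (-1 - y + x * y)) -> False.
Proof.
move=> K1 K2 K3.
have [x0|x0|x0] := ltgtP x 0; last by move: K2; rewrite x0 !mul0r ltxx.
all: have [y0|y0|y0] := ltgtP y 0; last by move: K3; rewrite y0 mulr0 !mul0r ltxx.
- have [u0|u0|u0] := ltgtP (1 + x) 0; last by move: K1; rewrite u0 !mul0r ltxx.
    have c1 : 0 < (- (1 + x)) * (- (1 + x + y)) * (- (1 + y - x ^+ 2)).
      by rewrite !mulr_gt0 // oppr_gt0; nra.
    have c3 : 0 < (- (1 + x)) * (- x) * (- y) * (- (1 + x - x * y)).
      by rewrite !mulr_gt0 // oppr_gt0; nra.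
    nra.
  have [v0|v0|v0] := ltgtP (1 + y) 0; last by move: K1; rewrite v0 mul0r !mulr0 ltxx.
    have c1 : 0 < (1 + x) * (- (1 + x + y)) * (- (1 + y - x ^+ 2)).
      by rewrite !mulr_gt0 // oppr_gt0; nra.
    have vB : 0 < (- (1 + y)) * (-1 - y + x * y) by rewrite mulr_gt0 ?oppr_gt0 //; nra.
    nra.
  have xyB : 0 < - ((x - y) * (-1 - y + x * y)).
    have c : 0 < (- x) * (1 + y) by rewrite mulr_gt0 ?oppr_gt0.
    by rewrite -(pmulr_rgt0 _ c); nra.
  have AB : 0 < (1 + x - x * y) * (-1 - y + x * y).
    have c : 0 < (1 + x) * (- x) * (- y) * (1 + y) by rewrite !mulr_gt0 ?oppr_gt0.
    by rewrite -(pmulr_rgt0 _ c); nra.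
  by have := sqr_ge0 (-1 - y + x * y); nra.
- have c2 : 0 < (- x) * (y - x) by nra.
  have vB : 0 < (1 + y) * (1 + y - x * y) by rewrite mulr_gt0 //; nra.
  nra.
- have c2 : 0 < x * (x - y) by nra.
  have c3 : 0 < (1 + x) * x * (- y) * (1 + x - x * y).
    by rewrite !mulr_gt0 ?oppr_gt0 //; nra.
  nra.
- have BD : 0 < (-1 - y + x * y) * (1 + y - x ^+ 2).
    have c : 0 < (1 + x) * (1 + x + y) * (1 + y) by rewrite !mulr_gt0 //; lra.
    by rewrite -(pmulr_rgt0 _ c); nra.
  have xyB : 0 < (x - y) * (-1 - y + x * y).
    have c : 0 < x * (1 + y) by rewrite !mulr_gt0 //; lra.
    by rewrite -(pmulr_rgt0 _ c); nra.
  by have := sqr_ge0 (-1 - y + x * y); nra.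
Qed.

End Signs.

Section TMap.
Variable R : realType.
Implicit Types (s x y : R) (p : R * R).

Lemma Eaff_curve s x y :
  Eaff s (x, y) -> (x + 1) * (y + 1) * (x + y + 1) = s * x * y.
Proof. by move=> /eqP; rewrite subr_eq0 => /eqP. Qed.

Lemma T_defined_neq0 x y : T_defined (x, y) ->
  [/\ 1 + x != 0, -1 - y + x * y != 0, 1 + x - y ^+ 2 != 0 & 1 + y - x ^+ 2 != 0].
Proof.
by case=> /=; rewrite !mulf_eq0 !negb_or => /andP[/andP[-> ->] ->] /andP[-> _].
Qed.

Lemma Eaff_T_defined_neq0 s x y :
  Eaff s (x, y) -> T_defined (x, y) -> x != 0 /\ y != 0.
Proof.
move=> E /T_defined_neq0[u0 B0 _ _].
split; apply/eqP => z0; move: E; rewrite /Eaff /Epoly z0 /=.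
- by move: B0; rewrite z0; apply: contraNnot => E; apply/eqP; nra.
- by move: u0; apply: contraNnot => E; apply/eqP; nra.
Qed.

Lemma T_level_identity x y : T_defined (x, y) ->
  let X := (T (x, y)).1 in let Y := (T (x, y)).2 in
  (x + 1) * (y + 1) * (x + y + 1) * ((X + 1) * (Y + 1) * (X + Y + 1)) +
  x * y * (X * Y) = 0.
Proof.
by move=> /T_defined_neq0[u0 B0 C0 D0]; rewrite /T /=; field; rewrite u0 B0 C0 D0.
Qed.

Lemma Eaff_T s p : s != 0 -> T_defined p -> Eaff s p -> Eaff (- s^-1) (T p).
Proof.
case: p => x y s0 def E; have [x0 y0] := Eaff_T_defined_neq0 E def.
have := T_level_identity def; rewrite /= (Eaff_curve E) => id.
change (Epoly (- s^-1) (T (x, y)).1 (T (x, y)).2 = 0); rewrite /Epoly.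
set X := (T _).1 in id *; set Y := (T _).2 in id *.
have -> : (X + 1) * (Y + 1) * (X + Y + 1) - - s^-1 * X * Y =
          (s * x * y * ((X + 1) * (Y + 1) * (X + Y + 1)) + x * y * (X * Y)) /
          (s * x * y).
  by field; rewrite s0 x0 y0.
by rewrite id mul0r.
Qed.

Lemma T_sign_obstruction s p : T_defined p -> Eaff s p ->
  ~ [/\ 0 < (T p).1 * (T p).2, 0 < - s * ((T p).1 * ((T p).1 + 1))
      & 0 < - s * ((T p).2 * ((T p).2 + 1))].
Proof.
case: p => x y def E [XY XX YY].
have [u0 B0 C0 D0] := T_defined_neq0 def.
have [x0 y0] := Eaff_T_defined_neq0 E def.
have s_def : s = (x + 1) * (y + 1) * (x + y + 1) / (x * y).
  by rewrite (Eaff_curve E); field; rewrite x0 y0.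
have K1 : 0 < (1 + x) * (1 + x + y) * (1 + y - x ^+ 2) * ((1 + y) * (-1 - y + x * y)).
  apply: (gt0_of_mul_sqr (b := (1 + x - x * y) * (x - y) /
    ((1 + x) * (-1 - y + x * y) * (1 + y - x ^+ 2) * (1 + x - y ^+ 2))) XY).
  by rewrite /T /=; field; rewrite u0 B0 C0 D0.
have S2 : 0 < s * (y * (1 + y) * (x - y) * (1 + y - x ^+ 2)).
  apply: (gt0_of_mul_sqr (b := (1 + x - x * y) /
    ((1 + x) * (-1 - y + x * y) * (1 + x - y ^+ 2))) XX).
  by rewrite /T /=; field; rewrite u0 B0 C0.
have S3 : 0 < s * ((1 + x + y) * (1 + x - x * y) * (-1 - y + x * y)).
  apply: (gt0_of_mul_sqr (b := (x - y) / ((1 + y - x ^+ 2) * (1 + x - y ^+ 2))) YY).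
  by rewrite /T /=; field; rewrite C0 D0.
apply: (sign_obstruction K1).
- apply: (gt0_of_mul_sqr (b := s * y * (1 + y - x ^+ 2)) (mulr_gt0 K1 S2)).
  by rewrite s_def; field; rewrite x0 y0.
- apply: (gt0_of_mul_sqr (b := s * (-1 - y + x * y) * (1 + x + y) * (1 + y - x ^+ 2))
    (mulr_gt0 (mulr_gt0 K1 K1) S3)).
  by rewrite s_def; field; rewrite x0 y0.
Qed.

Lemma T_not_in_box s p : 0 < s -> T_defined p -> Eaff s p ->
  ~ (-1 < (T p).1 < 0 /\ -1 < (T p).2 < 0).
Proof.
move=> s0 def E [/andP[X1 X0] /andP[Y1 Y0]]; apply: (T_sign_obstruction def E).
have XX : (T p).1 * ((T p).1 + 1) < 0 by nra.
have YY : (T p).2 * ((T p).2 + 1) < 0 by nra.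
by split; nra.
Qed.

Lemma T_not_in_quadrant s p : s < 0 -> T_defined p -> Eaff s p ->
  ~ (0 < (T p).1 /\ 0 < (T p).2).
Proof.
move=> s0 def E [X0 Y0]; apply: (T_sign_obstruction def E).
have XX : 0 < (T p).1 * ((T p).1 + 1) by nra.
have YY : 0 < (T p).2 * ((T p).2 + 1) by nra.
by split; nra.
Qed.

End TMap.

Section UnboundedComponents.
Variable R : realType.
Implicit Types (r e x y t : R) (p : R * R) (I : set R).

Lemma connected_component_unbounded (A S : set (R * R)) p :
  connected S -> S `<=` A -> S p ->
  (forall M, exists2 q, S q & M < `|q.1| \/ M < `|q.2|) ->
  ~ bounded2 (connected_component A p).
Proof.
move=> Sconn SA Sp Sunb [M bdM].
have [q Sq qM] := Sunb M.
have [q1M q2M] := bdM q (connected_component_max Sp SA Sconn Sq).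
by case: qM; lra.
Qed.

Lemma Epoly_sym r x y : Epoly r x y = Epoly r y x.
Proof. by rewrite /Epoly; ring. Qed.

Lemma graph_component_unbounded r I (g : R -> R) x0 :
  is_interval I -> (forall M, exists2 x, I x & M < `|x|) -> I x0 ->
  (forall x, I x -> {for x, continuous g}) ->
  (forall x, I x -> Epoly r x (g x) = 0) ->
  ~ bounded2 (connected_component (Eaff r) (x0, g x0)) /\
  ~ bounded2 (connected_component (Eaff r) (g x0, x0)).
Proof.
move=> Iint Iunb Ix0 gcont gE.
have Iconn : connected I by apply/connected_intervalP.
have image_unbounded (F : R -> R * R) : (forall x, I x -> {for x, continuous F}) ->
    (forall x, I x -> Eaff r (F x)) -> (forall x, (F x).1 = x \/ (F x).2 = x) ->
    ~ bounded2 (connected_component (Eaff r) (F x0)).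
  move=> Fcont FE Fx; apply: (@connected_component_unbounded _ (F @` I)).
  - apply: connected_continuous_connected Iconn _.
    by apply: continuous_in_subspaceT => x; rewrite inE => /Fcont.
  - by move=> _ [x Ix <-]; exact: FE.
  - by exists x0.
  - move=> M; have [x Ix Mx] := Iunb M.
    by exists (F x); [exists x | case: (Fx x) => ->; [left | right]].
split.
- apply: (image_unbounded (fun x => (x, g x))) => [x /gcont gc|x /gE //|x].
    exact: cvg_pair cvg_id gc.
  by left.
- apply: (image_unbounded (fun x => (g x, x))) => [x /gcont gc|x /gE|x].
  + exact: cvg_pair gc cvg_id.
  + by rewrite /Eaff /= Epoly_sym.
  + by right.
Qed.

Lemma ray_le_unbounded x0 :
  is_interval [set x | x <= x0] /\ forall M, exists2 x, x <= x0 & M < `|x|.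
Proof.
split=> [a b _ bx0 x /andP[_ /le_trans]|M]; first exact.
have := normr_ge0 M; have := ler_norm M; have := normr_ge0 x0.
exists (- `|x0| - `|M| - 1); first by have := ler_norm (- x0); rewrite normrN; lra.
by rewrite ltr0_norm; lra.
Qed.

Lemma ray_ge_unbounded x0 :
  is_interval [set x | x0 <= x] /\ forall M, exists2 x, x0 <= x & M < `|x|.
Proof.
split=> [a b ax0 _ x /andP[+ _]|M]; first exact: le_trans.
have := normr_ge0 M; have := ler_norm M; have := normr_ge0 x0.
exists (`|x0| + `|M| + 1); first by have := ler_norm x0; lra.
by rewrite gtr0_norm; lra.
Qed.

(* Epoly r x y = (x+1) y^2 + b(x) y + (x+1)^2 with b = ycoef r.  Its roots
   (-b -+ sqrt disc) / (2 (x+1)) are written 2 (x+1)^2 / (-b +- sqrt disc),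
   a form that remains defined at x = -1. *)
Definition ycoef r : {poly R} := ('X + 1) * ('X + 2%:P) - r%:P * 'X.
Definition ydisc r : {poly R} := ycoef r ^+ 2 - 4%:P * ('X + 1) ^+ 3.
Definition branch_denom r e x := - (ycoef r).[x] - e * Num.sqrt (ydisc r).[x].
Definition branch r e x := 2 * (x + 1) ^+ 2 / branch_denom r e x.

Lemma ycoef_horner r x : (ycoef r).[x] = (x + 1) * (x + 2) - r * x.
Proof. by rewrite /ycoef !(hornerD, hornerN, hornerM, hornerX, hornerC). Qed.

Lemma ydisc_horner r x : (ydisc r).[x] = (ycoef r).[x] ^+ 2 - 4 * (x + 1) ^+ 3.
Proof. by rewrite /ydisc !(hornerD, hornerN, hornerM, hornerX, hornerC, horner_exp). Qed.

Lemma Epoly_quadratic r x y :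
  Epoly r x y = (x + 1) * y ^+ 2 + (ycoef r).[x] * y + (x + 1) ^+ 2.
Proof. by rewrite /Epoly ycoef_horner; ring. Qed.

Lemma ydisc_Epoly r x y : (ydisc r).[x] =
  (2 * (x + 1) * y + (ycoef r).[x]) ^+ 2 - 4 * (x + 1) * Epoly r x y.
Proof. by rewrite Epoly_quadratic ydisc_horner; ring. Qed.

Lemma sqrt_ydisc_sqr r x : 0 <= (ydisc r).[x] ->
  Num.sqrt (ydisc r).[x] ^+ 2 = (ycoef r).[x] ^+ 2 - 4 * (x + 1) ^+ 3.
Proof. by move=> D0; rewrite sqr_sqrtr // ydisc_horner. Qed.

Lemma branch_denom_neq0 r e x :
  x + 1 != 0 -> 0 <= (ydisc r).[x] -> e ^+ 2 = 1 -> branch_denom r e x != 0.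
Proof.
move=> x1 D0 e2; apply/eqP => d0; have sq := sqrt_ydisc_sqr D0.
have : branch_denom r e x * (- (ycoef r).[x] + e * Num.sqrt (ydisc r).[x]) =
       4 * (x + 1) ^+ 3.
  by rewrite /branch_denom; ring: sq e2.
rewrite d0 mul0r => cube0; have : (x + 1) ^+ 3 = 0 by lra.
by apply/eqP; rewrite expf_eq0.
Qed.

Lemma Epoly_branch r e x :
  0 <= (ydisc r).[x] -> e ^+ 2 = 1 -> branch_denom r e x != 0 ->
  Epoly r x (branch r e x) = 0.
Proof.
move=> D0 e2; have sq := sqrt_ydisc_sqr D0.
by rewrite Epoly_quadratic /branch /branch_denom => d0; field: sq e2.
Qed.

Lemma branch_continuous r e x :
  branch_denom r e x != 0 -> {for x, continuous (branch r e)}.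
Proof.
move=> d0; have horner_cont (p : {poly R}) : {for x, continuous (horner p)}.
  exact: continuous_horner.
apply: continuousM; last apply: continuousV d0 _.
- have -> : (fun t : R => 2 * (t + 1) ^+ 2) = horner (2%:P * ('X + 1) ^+ 2).
    by apply: funext => t; rewrite !(hornerD, hornerM, hornerX, hornerC, horner_exp).
  exact: horner_cont.
- apply: continuousB; first exact: continuousN (horner_cont _).
  apply: continuousM; first exact: cvg_cst.
  exact: continuous_comp (horner_cont _) (@sqrt_continuous R _).
Qed.

Lemma branch_through r e x y : Epoly r x y = 0 ->
  e * Num.sqrt (ydisc r).[x] = 2 * (x + 1) * y + (ycoef r).[x] ->
  branch_denom r e x != 0 -> branch r e x = y.
Proof.
rewrite Epoly_quadratic => E ez d0; apply: (mulIf d0).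
by rewrite divfK // /branch_denom ez -[LHS]subr0 -(mulr0 2) -E; ring.
Qed.

Lemma branch_sign_exists r x y : Epoly r x y = 0 ->
  exists2 e, e ^+ 2 = 1 &
    e * Num.sqrt (ydisc r).[x] = 2 * (x + 1) * y + (ycoef r).[x].
Proof.
move=> E; set z := 2 * (x + 1) * y + _.
have -> : Num.sqrt (ydisc r).[x] = `|z|.
  by rewrite (ydisc_Epoly r x y) E mulr0 subr0 sqrtr_sqr.
have [z0|z0] := leP 0 z.
- by exists 1; rewrite ?expr1n // mul1r ger0_norm.
- by exists (-1); rewrite ?sqrrN ?expr1n // mulN1r ltr0_norm ?opprK.
Qed.

Lemma branch_component_unbounded r e I x0 :
  is_interval I -> (forall M, exists2 x, I x & M < `|x|) -> I x0 -> e ^+ 2 = 1 ->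
  (forall x, I x -> 0 <= (ydisc r).[x] /\ branch_denom r e x != 0) ->
  ~ bounded2 (connected_component (Eaff r) (x0, branch r e x0)) /\
  ~ bounded2 (connected_component (Eaff r) (branch r e x0, x0)).
Proof.
move=> Iint Iunb Ix0 e2 Ibranch.
apply: graph_component_unbounded Iint Iunb Ix0 _ _ => x /Ibranch[D0 d0].
  exact: branch_continuous.
exact: Epoly_branch.
Qed.

Lemma ydisc_ge0_left r t : t <= -1 -> 0 <= (ydisc r).[t].
Proof.
move=> t1; rewrite ydisc_horner.
by have := sqr_ge0 (ycoef r).[t]; have := sqr_ge0 (t + 1); nra.
Qed.

Lemma ydisc_ge0_right r t : r < 0 -> 0 <= t -> 0 <= (ydisc r).[t].
Proof.
move=> r0 t0; rewrite ydisc_horner ycoef_horner.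
have -> : ((t + 1) * (t + 2) - r * t) ^+ 2 - 4 * (t + 1) ^+ 3 =
          t * (t * (t + 1) ^+ 2 - 2 * r * (t + 1) * (t + 2) + r ^+ 2 * t) by ring.
have : 0 <= t * (t + 1) ^+ 2 by rewrite mulr_ge0 ?sqr_ge0.
have : 0 <= r ^+ 2 * t by rewrite mulr_ge0 ?sqr_ge0.
have : 0 <= - r * (t + 1) * (t + 2) by rewrite !mulr_ge0 //; lra.
by move=> *; rewrite mulr_ge0 //; lra.
Qed.

Lemma ycoef_gt0 r t : 1 < r -> t <= 0 -> 0 < (ycoef r).[t].
Proof.
move=> r1 t0; rewrite ycoef_horner.
have [t_half|t_half] := lerP t (-1/2); last by nra.
by have := sqr_ge0 (t + 3/2); nra.
Qed.

Lemma ydisc_ge0_mid r t : 1 < r -> t <= 0 -> 0 <= (ydisc r).[t].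
Proof.
move=> r1 t0; have [t1|t1] := lerP t (-1); first exact: ydisc_ge0_left.
have b0 : 0 <= (t + 1) * (t + 2) by nra.
have b1 : (t + 1) * (t + 2) <= (ycoef r).[t] by rewrite ycoef_horner; nra.
have : ((t + 1) * (t + 2)) ^+ 2 <= (ycoef r).[t] ^+ 2 by nra.
have : ((t + 1) * (t + 2)) ^+ 2 - 4 * (t + 1) ^+ 3 = ((t + 1) * t) ^+ 2 by ring.
by rewrite ydisc_horner; have := sqr_ge0 ((t + 1) * t); lra.
Qed.

Lemma component_unbounded_left r x y : Epoly r x y = 0 -> x < -1 ->
  ~ bounded2 (connected_component (Eaff r) (x, y)) /\
  ~ bounded2 (connected_component (Eaff r) (y, x)).
Proof.
move=> E x1; have [e e2 ez] := branch_sign_exists E.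
have [Iint Iunb] := ray_le_unbounded x.
have on_ray t : t <= x -> 0 <= (ydisc r).[t] /\ branch_denom r e t != 0.
  move=> tx; have D0 : 0 <= (ydisc r).[t] by apply: ydisc_ge0_left; lra.
  by split=> //; apply: branch_denom_neq0 => //; apply: ltr0_neq0; lra.
rewrite -(branch_through E ez (on_ray x (lexx x)).2).
exact: branch_component_unbounded Iint Iunb (lexx x) e2 on_ray.
Qed.

Lemma component_unbounded_right r x y : r < 0 -> Epoly r x y = 0 -> 0 <= x ->
  ~ bounded2 (connected_component (Eaff r) (x, y)) /\
  ~ bounded2 (connected_component (Eaff r) (y, x)).
Proof.
move=> r0 E x0; have [e e2 ez] := branch_sign_exists E.
have [Iint Iunb] := ray_ge_unbounded x.
have on_ray t : x <= t -> 0 <= (ydisc r).[t] /\ branch_denom r e t != 0.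
  move=> xt; have D0 : 0 <= (ydisc r).[t] by apply: ydisc_ge0_right; lra.
  by split=> //; apply: branch_denom_neq0 => //; apply: lt0r_neq0; lra.
rewrite -(branch_through E ez (on_ray x (lexx x)).2).
exact: branch_component_unbounded Iint Iunb (lexx x) e2 on_ray.
Qed.

Lemma component_unbounded_mid r x y : 1 < r -> Epoly r x y = 0 ->
  -1 <= x <= 0 -> -1 <= y ->
  ~ bounded2 (connected_component (Eaff r) (x, y)) /\
  ~ bounded2 (connected_component (Eaff r) (y, x)).
Proof.
move=> r1 E /andP[x1 x0] y1; have [Iint Iunb] := ray_le_unbounded x.
have on_ray t : t <= x -> 0 <= (ydisc r).[t] /\ branch_denom r 1 t != 0.
  move=> tx; have t0 : t <= 0 by lra.
  split; first exact: ydisc_ge0_mid.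
  apply: ltr0_neq0; rewrite /branch_denom mul1r.
  by have := sqrtr_ge0 (ydisc r).[t]; have := ycoef_gt0 r1 t0; lra.
have ez : 1 * Num.sqrt (ydisc r).[x] = 2 * (x + 1) * y + (ycoef r).[x].
  have z0 : 0 <= 2 * (x + 1) * y + (ycoef r).[x].
    rewrite ycoef_horner.
    have : 0 <= (x + 1) * (y + 1) by rewrite mulr_ge0 //; lra.
    have : 0 <= - x * (r - 1 - x) by rewrite mulr_ge0 //; lra.
    lra.
  by rewrite mul1r (ydisc_Epoly r x y) E mulr0 subr0 sqrtr_sqr ger0_norm.
rewrite -(branch_through E ez (on_ray x (lexx x)).2).
exact: branch_component_unbounded Iint Iunb (lexx x) (expr1n _ _) on_ray.
Qed.

Lemma Eaff_unbounded_outside_box r p : r < 0 -> Eaff r p ->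
  ~ (-1 < p.1 < 0 /\ -1 < p.2 < 0) -> ~ bounded2 (connected_component (Eaff r) p).
Proof.
case: p => x y /= r0 E out; have E' : Epoly r y x = 0 by rewrite Epoly_sym.
have [x1|x1] := ltP x (-1); first exact: (component_unbounded_left E x1).1.
have [y1|y1] := ltP y (-1); first exact: (component_unbounded_left E' y1).2.
have [x0|x0] := leP 0 x; first exact: (component_unbounded_right r0 E x0).1.
have [y0|y0] := leP 0 y; first exact: (component_unbounded_right r0 E' y0).2.
have off_m1 a b : Epoly r a b = 0 -> b < 0 -> a != -1.
  by move=> Eab b0; apply/eqP => a1; move: Eab; rewrite /Epoly a1; nra.
exfalso; apply: out; rewrite x0 y0 !andbT !lt_neqAle x1 y1 !andbT.
by rewrite !(eq_sym (-1)) (off_m1 _ _ E y0) (off_m1 _ _ E' x0).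
Qed.

Lemma Eaff_unbounded_outside_quadrant r p : 1 < r -> Eaff r p ->
  ~ (0 < p.1 /\ 0 < p.2) -> ~ bounded2 (connected_component (Eaff r) p).
Proof.
case: p => x y /= r1 E out; have E' : Epoly r y x = 0 by rewrite Epoly_sym.
have [x1|x1] := ltP x (-1); first exact: (component_unbounded_left E x1).1.
have [y1|y1] := ltP y (-1); first exact: (component_unbounded_left E' y1).2.
have [x0|x0] := leP x 0.
  by apply: (component_unbounded_mid r1 E _ y1).1; rewrite x1.
have [y0|y0] := leP y 0.
  by apply: (component_unbounded_mid r1 E' _ x1).2; rewrite y1.
by exfalso; apply: out.
Qed.

End UnboundedComponents.

Theorem mainTheorem4 (R : realType) (r : R) :
  ((r_minus R < r < 0) \/ (r_plus R < r)) ->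
  forall p : R * R,
    Eaff r p ->
    bounded2 (connected_component (Eaff r) p) ->
    T_defined p -> T_defined (T p) ->
    Eaff r (T (T p)) /\
    ~ bounded2 (connected_component (Eaff r) (T (T p))).
Proof.
move=> r_range p Ep _ def1 def2.
have r_cases : r < 0 \/ 1 < r.
  case: r_range => [/andP[_ r0] | r_big]; first by left.
  by right; apply: le_lt_trans r_big; rewrite /r_plus; have := sqrtr_ge0 (5 : R); lra.
have r0 : r != 0 by case: r_cases => [/ltr0_neq0 | /(lt_trans ltr01)/lt0r_neq0].
have Eq : Eaff (- r^-1) (T p) := Eaff_T r0 def1 Ep.
have s0 : - r^-1 != 0 by rewrite oppr_eq0 invr_eq0.
have ETT : Eaff r (T (T p)) by have := Eaff_T s0 def2 Eq; rewrite invrN invrK opprK.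
split => //; case: r_cases => [r_neg | r_gt1].
- have s_pos : 0 < - r^-1 by rewrite oppr_gt0 invr_lt0.
  exact: Eaff_unbounded_outside_box r_neg ETT (T_not_in_box s_pos def2 Eq).
- have s_neg : - r^-1 < 0 by rewrite oppr_lt0 invr_gt0 (lt_trans ltr01).
  exact: Eaff_unbounded_outside_quadrant r_gt1 ETT (T_not_in_quadrant s_neg def2 Eq).
Qed.
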